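(* Let $x\in\{\text{complete},\text{preferred},\text{semi-stable},\text{stage},\text{stage2},\text{CF2},\text{grounded},\text{ideal},\text{eager}\}$. For every two argumentation frameworks $AF=(AR,Attacks)$ and $AF'=(AR',Attacks')$ such that $AF\preceq_{RM}AF'$: $$\forall E\in\sigma_x(AF)\ \exists E'\in\sigma_x(AF') \text{ such that } (E'\not\subseteq AR\ \lor\ E'=E).$$
   Context: An argumentation framework is a pair $AF=(AR,Attacks)$ with $AR$ finite and $Attacks\subseteq AR\times AR$; $a$ attacks $b$ iff $(a,b)\in Attacks$; $S$ attacks $b$ iff some element of $S$ attacks $b$. $AF\preceq_N AF'$ (normal expansion) iff $AR\subseteq AR'$, $Attacks\subseteq Attacks'$ and no $(a,b)\in Attacks'\setminus Attacks$ has $a,b\in AR$. Attack sequence: $\langle a_1,\dots,a_n\rangle$ of pairwise distinct arguments with $(a_i,a_{i+1})\in Attacks$; $b$ is reachable from $a$ iff such a sequence has $a_1=a,a_n=b$. An attack cycle is a sequence $\langle a_1,\dots,a_n\rangle$ with $(a_i,a_{i+1})\in Attacks$ for $1\le i\le n-1$, $a_1=a_n$, and $a_1,\dots,a_{n-1}$ pairwise distinct; $\mathcal C(AF)$ is the set of attack cycles of $AF$. $AF\preceq_{RM}AF'$ (rational man's expansion) iff (1) $AF\preceq_N AF'$; (2) $\mathcal C(AF')=\mathcal C(AF)$; (3) for all $a\in AR$ and $b\in AR'\setminus AR$ such that $b$ is reachable from $a$ in $AF'$, $a$ occurs in no attack cycle of $AF'$. Semantics: $S$ is conflict-free iff no element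 of $S$ attacks an element of $S$; $a$ is acceptable w.r.t. $S$ iff every attacker of $a$ is attacked by $S$; a conflict-free $S$ is admissible iff all its elements are acceptable w.r.t. $S$; $S^+=\{b:\text{some }a\in S\text{ attacks }b\}$. Among admissible sets: complete = contains every argument acceptable w.r.t. it; preferred = $\subseteq$-maximal admissible; grounded = $\subseteq$-minimal complete; ideal = $\subseteq$-maximal admissible set contained in every preferred extension; semi-stable = complete with $\subseteq$-maximal $S\cup S^+$ among complete extensions; eager = $\subseteq$-maximal admissible set contained in every semi-stable extension. Naive = $\subseteq$-maximal conflict-free; stage = conflict-free $S$ with no conflict-free $S'$ such that $S'\cup S'^+\supsetneq S\cup S^+$. SCCs: maximal sets of mutually reachable arguments ($SCCS_{AF}$); $AF\downarrow_S=(S,Attacks\cap(S\times S))$; for SCC $S$ and $E\subseteq AR$: $S^-_{out}=\{a\notin S: a\text{ attacks some element of }S\}$, $D_{AF}(S,E)=\{a\in S: E\cap S^-_{out}\text{ attacks }a\}$, $UP_{AF}(S,E)=S\setminus D_{AF}(S,E)$. CF2 (resp. stage2): $E$ is an extension of $AF$ iff either $|SCCS_{AF}|=1$ and $E$ is naive (resp. stage), or for every $S\in SCCS_{AF}$, $E\cap S$ is a CF2 (resp. stage2) extension of $AF\downarrow_{UP_{AF}(S,E)}$. $\sigma_x(AF)$ is the set of all $x$-extensions of $AF$. *)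

(* Arguments live in a common finite universe type T;
   an argumentation framework is a finite set of arguments plus a set of
   attack pairs (well-formedness: attacks are between arguments). *)
From mathcomp Require Import all_boot.
Set Implicit Arguments. Unset Strict Implicit. Unset Printing Implicit Defensive.

Section AFDefs.
Variable T : finType.

Record AF := mkAF { args : {set T}; atts : {set T * T} }.

Definition wf_AF (F : AF) : Prop := atts F \subset setX (args F) (args F).

Definition attacks (F : AF) (a b : T) : bool := (a, b) \in atts F.

Definition normal_exp (F F' : AF) : Prop :=
  args F \subset args F' /\ atts F \subset atts F' /\
  (forall a b, (a, b) \in atts F' -> (a, b) \notin atts F ->
     ~ (a \in args F /\ b \in args F)).

Definition attack_seq (F : AF) (s : seq T) : Prop :=
  match s with
  | [::] => False
  | a :: r => [/\ uniq s, all (fun x => x \in args F) s & path (attacks F) a r]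
  end.

Definition reachable (F : AF) (a b : T) : Prop :=
  exists r, attack_seq F (a :: r) /\ last a r = b.

Definition is_cycle (F : AF) (s : seq T) : Prop :=
  match s with
  | [::] => False
  | a :: r => [/\ r != [::], last a r = a, path (attacks F) a r,
               uniq (belast a r) & all (fun x => x \in args F) s]
  end.

Definition same_cycles (F F' : AF) : Prop :=
  forall s, is_cycle F s <-> is_cycle F' s.

Definition in_some_cycle (F : AF) (a : T) : Prop :=
  exists s, is_cycle F s /\ a \in s.

Definition rm_exp (F F' : AF) : Prop :=
  [/\ normal_exp F F', same_cycles F F' &
      forall a b, a \in args F -> b \in args F' :\: args F ->
        reachable F' a b -> ~ in_some_cycle F' a].

Definition splus (F : AF) (S : {set T}) : {set T} :=
  [set b | [exists a in S, attacks F a b]].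

Definition range (F : AF) (S : {set T}) : {set T} := S :|: splus F S.

Definition conflict_free (F : AF) (S : {set T}) : Prop :=
  S \subset args F /\ forall a b, a \in S -> b \in S -> ~~ attacks F a b.

Definition acceptable (F : AF) (a : T) (S : {set T}) : Prop :=
  forall b, attacks F b a -> exists2 c, c \in S & attacks F c b.

Definition admissible (F : AF) (S : {set T}) : Prop :=
  conflict_free F S /\ forall a, a \in S -> acceptable F a S.

Definition complete (F : AF) (S : {set T}) : Prop :=
  admissible F S /\ forall a, a \in args F -> acceptable F a S -> a \in S.

Definition preferred (F : AF) (S : {set T}) : Prop :=
  admissible F S /\ forall S' : {set T}, admissible F S' -> S \subset S' -> S' = S.

Definition grounded (F : AF) (S : {set T}) : Prop :=
  complete F S /\ forall S' : {set T}, complete F S' -> S' \subset S -> S' = S.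

Definition ideal (F : AF) (S : {set T}) : Prop :=
  [/\ admissible F S, (forall P : {set T}, preferred F P -> S \subset P) &
      forall S' : {set T}, admissible F S' -> (forall P : {set T}, preferred F P -> S' \subset P) ->
        S \subset S' -> S' = S].

Definition semi_stable (F : AF) (S : {set T}) : Prop :=
  complete F S /\ forall S' : {set T}, complete F S' ->
    range F S \subset range F S' -> range F S' = range F S.

Definition eager (F : AF) (S : {set T}) : Prop :=
  [/\ admissible F S, (forall P : {set T}, semi_stable F P -> S \subset P) &
      forall S' : {set T}, admissible F S' -> (forall P : {set T}, semi_stable F P -> S' \subset P) ->
        S \subset S' -> S' = S].

Definition naive (F : AF) (S : {set T}) : Prop :=
  conflict_free F S /\ forall S' : {set T}, conflict_free F S' -> S \subset S' -> S' = S.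

Definition stage (F : AF) (S : {set T}) : Prop :=
  conflict_free F S /\
  ~ (exists S' : {set T}, conflict_free F S' /\ range F S \proper range F S').

Definition restrict (F : AF) (S : {set T}) : AF :=
  mkAF S [set p in atts F | (p.1 \in S) && (p.2 \in S)].

Definition mutually_reachable (F : AF) (S : {set T}) : Prop :=
  forall a b, a \in S -> b \in S -> reachable F a b.

Definition is_scc (F : AF) (S : {set T}) : Prop :=
  [/\ S != set0, S \subset args F, mutually_reachable F S &
      forall S' : {set T}, S \subset S' -> S' \subset args F -> mutually_reachable F S' -> S' = S].

Definition single_scc (F : AF) : Prop :=
  exists S : {set T}, is_scc F S /\ forall S' : {set T}, is_scc F S' -> S' = S.

Definition out_attackers (F : AF) (S : {set T}) : {set T} :=
  [set a in args F | (a \notin S) && [exists b in S, attacks F a b]].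

Definition Dset (F : AF) (S E : {set T}) : {set T} :=
  [set a in S | [exists c in E :&: out_attackers F S, attacks F c a]].

Definition UPset (F : AF) (S E : {set T}) : {set T} := S :\: Dset F S E.

(* fuel-based unfolding of the (well-founded) SCC recursion: each recursive
   call is on a strict subset of the arguments, so fuel #|AR|+1 suffices *)
Fixpoint scc_rec (base : AF -> {set T} -> Prop) (n : nat) (F : AF) (E : {set T})
  : Prop :=
  match n with
  | 0 => False
  | n'.+1 =>
      E \subset args F /\
      ((single_scc F /\ base F E) \/
       (~ single_scc F /\
        forall S : {set T}, is_scc F S -> scc_rec base n' (restrict F (UPset F S E)) (E :&: S)))
  end.

Definition cf2 (F : AF) (E : {set T}) : Prop := scc_rec naive #|args F|.+1 F E.
Definition stage2 (F : AF) (E : {set T}) : Prop := scc_rec stage #|args F|.+1 F E.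

End AFDefs.

Inductive semantics :=
  Complete | Preferred | SemiStable | Stage | Stage2 | CF2 | Grounded | Ideal | Eager.

Definition sigma (T : finType) (x : semantics) : AF T -> {set T} -> Prop :=
  match x with
  | Complete => @complete T
  | Preferred => @preferred T
  | SemiStable => @semi_stable T
  | Stage => @stage T
  | Stage2 => @stage2 T
  | CF2 => @cf2 T
  | Grounded => @grounded T
  | Ideal => @ideal T
  | Eager => @eager T
  end.

(* Let N = AR' \ AR be the new arguments and U the arguments of AF' from which
   some new argument is reachable. U is closed under attackers, and the rational
   man's conditions put no argument of U on an attack cycle of AF', so the number
   of ancestors strictly decreases along attacks inside U. There, a complete, CF2
   or stage2 extension X obeys "x in X iff no attacker of x is in X", which fixes
   X on U.
   Take a complete extension C0 of AF'. If C0 contains a new argument b, then b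
   lies in every complete, CF2 and stage2 extension of AF', and in every ideal or
   eager one (they contain the admissible set C0 ∩ U), so any x-extension of AF'
   leaves AR. Otherwise C0 ⊆ AR attacks every new argument, and so does every
   complete, CF2 or stage2 extension E of AF, which agrees with C0 on U ∩ AR.
   Such an E keeps its status in AF': its range grows by exactly N, and each SCC
   of AF' is an SCC of AF or a new singleton attacked by E.
   For stage, a stage extension S ⊆ AR of AF' whose range contains that of E has
   the same range as E in AF, so S and E agree on U ∩ AR and have the same range
   in AF'; then E itself is stage in AF'. *)

From mathcomp Require Import all_boot.
From Stdlib Require Import Classical IndefiniteDescription.
Set Implicit Arguments. Unset Strict Implicit. Unset Printing Implicit Defensive.

Section Extensions.
Variable T : finType.
Implicit Types (G : AF T) (A B C P S W X : {set T}) (a b c x y z : T).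

Lemma exists_maximal_above (P : {set T} -> Prop) (f : {set T} -> {set T}) S0 :
  P S0 -> exists S, [/\ P S, f S0 \subset f S &
    forall S', P S' -> f S \subset f S' -> f S' = f S].
Proof.
move: {2}#|~: f S0|.+1 (ltnSn #|~: f S0|) => n; elim: n S0 => [//|n IH] S0 ltS0n PS0.
have [[S' [PS' subS0S' neqS'S0]]|no_larger] :=
  classic (exists S', [/\ P S', f S0 \subset f S' & f S' <> f S0]).
  have ltS'n : #|~: f S'| < n.
    apply: leq_trans (proper_card _) ltS0n.
    by rewrite properC properEneq subS0S' andbT; apply/eqP => /esym.
  have [S [PS subS'S maxS]] := IH S' ltS'n PS'.
  by exists S; split=> //; apply: subset_trans subS'S.
exists S0; split=> // S' PS' subS0S'.
by apply: NNPP => neqS'S0; apply: no_larger; exists S'.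
Qed.

Lemma wf_attacks G a b : wf_AF G -> attacks G a b -> a \in args G /\ b \in args G.
Proof. by move=> wfG /(subsetP wfG); rewrite in_setX => /andP. Qed.

Lemma rangeP G A x :
  reflect (x \in A \/ exists2 a, a \in A & attacks G a x) (x \in range G A).
Proof.
rewrite !inE; apply: (iffP orP) => [[->|/existsP[a /andP[Aa ax]]]|[->|[a Aa ax]]]; auto.
  by right; exists a.
by right; apply/existsP; exists a; rewrite Aa.
Qed.

Lemma range_sub_attacked G A B x : range G A \subset range G B ->
  x \in A -> x \notin B -> exists2 y, y \in B & attacks G y x.
Proof.
move=> sAB Ax notBx; have /rangeP[Bx|//] := subsetP sAB x (ltac:(by apply/rangeP; left)).
by rewrite Bx in notBx.
Qed.

Lemma conflict_free_sub G A B : conflict_free G A -> B \subset A -> conflict_free G B.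
Proof.
case=> AG cfA BA; split=> [|u v Bu Bv]; first exact: subset_trans BA AG.
by apply: cfA; apply: (subsetP BA).
Qed.

Lemma acceptable_sub G a A B : acceptable G a A -> A \subset B -> acceptable G a B.
Proof. by move=> accA AB u ua; have [c Ac cu] := accA u ua; exists c; rewrite ?(subsetP AB). Qed.

Lemma admissible0 G : admissible G set0.
Proof. by split; [split=> [|u v]|move=> u]; rewrite ?sub0set ?inE. Qed.

Lemma admissibleU1 G A a : admissible G A -> a \in args G -> acceptable G a A ->
  admissible G (a |: A).
Proof.
move=> [[AG cfA] accA] Ga acc_a.
have not_Aa u : u \in A -> ~~ attacks G u a.
  move=> Au; apply/negP => ua; have [c Ac cu] := acc_a u ua.
  by have [d Ad dc] := accA u Au c cu; move: (cfA d c Ad Ac); rewrite dc.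
split; [split|].
- by rewrite subUset sub1set Ga AG.
- move=> u v; rewrite !in_setU1 => /predU1P[->|Au] /predU1P[->|Av]; last exact: cfA.
  + by apply/negP => aa; have [c Ac ca] := acc_a a aa; move: (not_Aa c Ac); rewrite ca.
  + by apply/negP => av; have [c Ac ca] := accA v Av a av; move: (not_Aa c Ac); rewrite ca.
  + exact: not_Aa.
- move=> u; rewrite in_setU1 => /predU1P[->|Au]; first exact: acceptable_sub (subsetUr _ _).
  exact: acceptable_sub (accA u Au) (subsetUr _ _).
Qed.

Lemma admissibleI_upset G W C : (forall x y, x \in W -> attacks G y x -> y \in W) ->
  admissible G C -> admissible G (C :&: W).
Proof.
move=> upW [cfC accC]; split=> [|x /setIP[Cx Wx] y yx].
  exact: conflict_free_sub cfC (subsetIl _ _).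
have [z Cz zy] := accC x Cx y yx.
by exists z; rewrite // in_setI Cz (upW y) // (upW x).
Qed.

Lemma preferred_complete G P : preferred G P -> complete G P.
Proof.
case=> admP maxP; split=> // a Ga acc_a.
by rewrite -(maxP _ (admissibleU1 admP Ga acc_a) (subsetUr _ _)) setU11.
Qed.

Lemma exists_preferred_above G A : admissible G A -> exists2 P, preferred G P & A \subset P.
Proof.
move=> admA; have [P [admP AP maxP]] := exists_maximal_above id admA.
by exists P => //; split=> // S admS PS; apply: maxP.
Qed.

Lemma exists_preferred G : exists P, preferred G P.
Proof. by have [P prefP _] := exists_preferred_above (admissible0 G); exists P. Qed.

Lemma exists_complete G : exists C, complete G C.
Proof. by have [P /preferred_complete] := exists_preferred G; exists P. Qed.

Lemma exists_grounded_sub G C : complete G C -> exists2 P, grounded G P & P \subset C.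
Proof.
move=> compC; have [P [compP CP minP]] := exists_maximal_above (@setC T) compC.
exists P; last by rewrite -setCS.
by split=> // S compS SP; apply: setC_inj; apply: minP; rewrite ?setCS.
Qed.

Lemma exists_semi_stable G : exists P, semi_stable G P.
Proof.
have [C compC] := exists_complete G.
by have [P [compP _ maxP]] := exists_maximal_above (range G) compC; exists P.
Qed.

Lemma conflict_free0 G : conflict_free G set0.
Proof. by case: (admissible0 G). Qed.

Lemma exists_naive G : exists P, naive G P.
Proof.
have [P [cfP _ maxP]] := exists_maximal_above id (conflict_free0 G).
by exists P; split=> // S cfS PS; apply: maxP.
Qed.

Lemma exists_stage_above G A : conflict_free G A ->
  exists2 P, stage G P & range G A \subset range G P.
Proof.
move=> cfA; have [P [cfP sAP maxP]] := exists_maximal_above (range G) cfA.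
exists P => //; split=> // [[S [cfS]]]; rewrite properEneq => /andP[/eqP neqPS sPS].
exact/neqPS/esym/maxP.
Qed.

Lemma exists_stage G : exists P, stage G P.
Proof. by have [P stP _] := exists_stage_above (conflict_free0 G); exists P. Qed.

(* [ideal G] and [eager G] are [ideal_wrt G (preferred G)] and
   [ideal_wrt G (semi_stable G)] by definition. *)
Definition ideal_wrt G (Q : {set T} -> Prop) S :=
  [/\ admissible G S, (forall P, Q P -> S \subset P) &
      forall S', admissible G S' -> (forall P, Q P -> S' \subset P) ->
        S \subset S' -> S' = S].

Lemma exists_ideal_wrt G Q : exists S, ideal_wrt G Q S.
Proof.
pose below S := admissible G S /\ forall P, Q P -> S \subset P.
have below0 : below set0 by split=> [|P _]; [exact: admissible0|exact: sub0set].
have [S [[admS belowS] _ maxS]] := @exists_maximal_above below id _ below0.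
by exists S; split=> // S' admS' belowS' SS'; apply: maxS.
Qed.

Lemma sub_ideal_wrt G Q A I : (exists P, Q P) -> (forall P, Q P -> admissible G P) ->
  admissible G A -> (forall P, Q P -> A \subset P) -> ideal_wrt G Q I -> A \subset I.
Proof.
move=> [P0 QP0] admQ [cfA accA] belowA [[cfI accI] belowI maxI].
have belowIA P : Q P -> I :|: A \subset P by move=> QP; rewrite subUset belowI ?belowA.
have admIA : admissible G (I :|: A).
  split=> [|u /setUP[Iu|Au]]; first exact: conflict_free_sub (proj1 (admQ _ QP0)) (belowIA _ QP0).
    exact: acceptable_sub (accI u Iu) (subsetUl _ _).
  exact: acceptable_sub (accA u Au) (subsetUr _ _).
by rewrite -(maxI _ admIA belowIA (subsetUl _ _)) subsetUr.
Qed.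

End Extensions.

Section Reachability.
Variable T : finType.
Implicit Types (G : AF T) (S : {set T}) (a b c x y z : T).

Definition attack_edge G : rel T :=
  fun x y => [&& attacks G x y, x \in args G & y \in args G].

Definition reachableb G a b := (a \in args G) && connect (attack_edge G) a b.

Lemma attack_edge_path_args G a p :
  path (attack_edge G) a p -> all (fun x => x \in args G) p.
Proof. by elim: p a => //= y p IH a /andP[/and3P[_ _ ->] /IH]. Qed.

Lemma attack_edge_path_attacks G a p : path (attack_edge G) a p -> path (attacks G) a p.
Proof. by apply: sub_path => u v /andP[]. Qed.

Lemma attacks_path_edge G a p : a \in args G -> all (fun x => x \in args G) p ->
  path (attacks G) a p -> path (attack_edge G) a p.
Proof.
elim: p a => //= y p IH a Ga /andP[Gy Gp] /andP[ay yp].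
by rewrite /attack_edge ay Ga Gy IH.
Qed.

Lemma reachableP G a b : reachable G a b <-> reachableb G a b.
Proof.
split=> [[r [[_ /= /andP[Ga Gr] ar] <-]]|/andP[Ga /connectP[p ap ->]]].
  by rewrite /reachableb Ga; apply/connectP; exists r; rewrite ?attacks_path_edge.
have [p' ap' uniq_p' _] := shortenP ap.
exists p'; split=> //; split=> //=.
  by rewrite Ga (attack_edge_path_args ap').
exact: attack_edge_path_attacks.
Qed.

Lemma reachableb_refl G a : a \in args G -> reachableb G a a.
Proof. by move=> Ga; rewrite /reachableb Ga connect0. Qed.

Lemma reachableb_trans G a b c : reachableb G a b -> reachableb G b c -> reachableb G a c.
Proof.
by case/andP=> Ga ab /andP[_ bc]; rewrite /reachableb Ga (connect_trans ab bc).
Qed.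

Lemma reachableb_args G a b : reachableb G a b -> b \in args G.
Proof.
case/andP=> Ga /connectP[p ap ->].
have /allP Gp := attack_edge_path_args ap.
by have := mem_last a p; rewrite inE => /predU1P[-> //|/Gp].
Qed.

Lemma reachableb_attack G a b c : reachableb G a b -> attacks G b c ->
  b \in args G -> c \in args G -> reachableb G a c.
Proof.
move=> ab bc Gb Gc; apply: reachableb_trans ab _.
by rewrite /reachableb Gb connect1 // /attack_edge bc Gb Gc.
Qed.

Lemma reachable_attacker_in_cycle G x y : reachableb G x y -> attacks G y x ->
  in_some_cycle G x.
Proof.
case/andP=> Gx /connectP[p xp ->]; case: (shortenP xp) => p' xp' uniq_p' _ yx.
exists (x :: rcons p' x); split; last exact: mem_head.
split.
- by case: p' {xp' uniq_p' yx}.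
- by rewrite last_rcons.
- by rewrite rcons_path (attack_edge_path_attacks xp') yx.
- by rewrite belast_rcons.
- by rewrite /= Gx all_rcons Gx (attack_edge_path_args xp').
Qed.

Lemma mutually_reachable_in_cycle G a b :
  reachableb G a b -> reachableb G b a -> a != b -> in_some_cycle G a.
Proof.
move=> ab /andP[Gb /connectP[q bq qa]] neq_ab.
case/lastP: q bq qa => [|q c] bq; first by move=> /= eq_ab; rewrite eq_ab eqxx in neq_ab.
rewrite last_rcons => eq_ca; subst c; move: bq; rewrite rcons_path => /andP[bq /andP[qa _]].
apply: reachable_attacker_in_cycle qa; apply: reachableb_trans ab _.
by rewrite /reachableb Gb (path_connect bq) ?mem_last.
Qed.

Definition mreachableb G a b := reachableb G a b && reachableb G b a.

Definition scc_of G a := [set z in args G | mreachableb G a z].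

Lemma mem_scc_of G a : a \in args G -> a \in scc_of G a.
Proof. by move=> Ga; rewrite inE Ga /mreachableb reachableb_refl. Qed.

Lemma mutually_reachableP G S :
  mutually_reachable G S <-> {in S &, forall a b, reachableb G a b}.
Proof. by split=> mrS a b Sa Sb; apply/reachableP; apply: mrS. Qed.

Lemma scc_of_mutually_reachable G a : mutually_reachable G (scc_of G a).
Proof.
apply/mutually_reachableP => u v; rewrite !inE.
by case/and3P=> _ _ ua /and3P[_ av _]; apply: reachableb_trans ua av.
Qed.

Lemma is_scc_scc_of G a : a \in args G -> is_scc G (scc_of G a).
Proof.
move=> Ga; split.
- by apply/set0Pn; exists a; apply: mem_scc_of.
- by apply/subsetP => z /setIdP[].
- exact: scc_of_mutually_reachable.
move=> S' sub_aS' S'G /mutually_reachableP mrS'; apply/setP => z.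
apply/idP/idP => [S'z|]; last exact: (subsetP sub_aS').
have S'a : a \in S' by apply: (subsetP sub_aS'); apply: mem_scc_of.
by rewrite inE (subsetP S'G) //= /mreachableb !mrS'.
Qed.

Lemma is_sccE G S a : is_scc G S -> a \in S -> S = scc_of G a.
Proof.
case=> _ SG /mutually_reachableP mrS maxS Sa; apply/esym/maxS.
- by apply/subsetP => z Sz; rewrite inE (subsetP SG) //= /mreachableb !mrS.
- by apply/subsetP => z /setIdP[].
- exact: scc_of_mutually_reachable.
Qed.

Lemma single_sccE G a : single_scc G -> a \in args G -> scc_of G a = args G.
Proof.
case=> S [_ uniqS] Ga; apply/eqP; rewrite eqEsubset; apply/andP; split.
  by apply/subsetP => z /setIdP[].
apply/subsetP => z Gz; rewrite (uniqS _ (is_scc_scc_of Ga)) -(uniqS _ (is_scc_scc_of Gz)).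
exact: mem_scc_of.
Qed.

Lemma single_scc1 G a : args G = [set a] -> single_scc G.
Proof.
move=> argsG; have Ga : a \in args G by rewrite argsG set11.
exists (scc_of G a); split=> [|S sccS]; first exact: is_scc_scc_of.
have [/set0Pn[b Sb] SG _ _] := sccS.
by have := subsetP SG _ Sb; rewrite argsG inE => /eqP eq_ba; rewrite (is_sccE sccS Sb) eq_ba.
Qed.

Lemma is_scc_proper G S : is_scc G S -> ~ single_scc G -> #|S| < #|args G|.
Proof.
move=> sccS not_single; have [/set0Pn[a Sa] SG _ _] := sccS.
rewrite ltn_neqAle subset_leq_card // andbT; apply/eqP => cardS; apply: not_single.
have eqS : S = args G by apply/eqP; rewrite eqEcard SG cardS leqnn.
exists S; split=> // S' sccS'; have [/set0Pn[b S'b] S'G _ _] := sccS'.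
by rewrite (is_sccE sccS' S'b) (is_sccE sccS (_ : b \in S)) // eqS (subsetP S'G).
Qed.

Definition ancestors G a := [set z in args G | reachableb G z a && ~~ reachableb G a z].

Lemma ancestors_proper G a b : reachableb G a b -> ~~ reachableb G b a ->
  ancestors G a \proper ancestors G b.
Proof.
move=> ab not_ba; rewrite properE; apply/andP; split.
  apply/subsetP => z /setIdP[Gz /andP[za not_az]].
  rewrite inE Gz (reachableb_trans za ab) /=.
  by apply: contra not_az; apply: reachableb_trans ab.
apply/subsetP => /(_ a); rewrite !inE ab not_ba.
by case/andP: ab => Ga _; rewrite Ga reachableb_refl //= => /(_ isT).
Qed.

Lemma ancestors_scc G S a b : is_scc G S -> a \in S -> b \in S ->
  ancestors G a = ancestors G b.
Proof.
have sub u v : mreachableb G u v -> ancestors G u \subset ancestors G v.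
  case/andP=> uv vu; apply/subsetP => z /setIdP[Gz /andP[zu not_uz]].
  rewrite inE Gz (reachableb_trans zu uv) /=.
  by apply: contra not_uz; apply: reachableb_trans uv.
move=> sccS Sa Sb; have /setIdP[_ ab] : b \in scc_of G a by rewrite -(is_sccE sccS Sa).
by apply/eqP; rewrite eqEsubset !sub // /mreachableb andbC.
Qed.

End Reachability.

Section SccRecursion.
Variable T : finType.
Implicit Types (G : AF T) (E S X : {set T}) (a b c s x z : T).

Lemma scc_rec_sub base n G E : scc_rec base n G E -> E \subset args G.
Proof. by case: n => [//|n] []. Qed.

Lemma scc_rec_mono base n m G E : n <= m -> scc_rec base n G E -> scc_rec base m G E.
Proof.
elim: n m G E => [|n IH] [|m] G E //= le_nm [EG [single|[not_single recS]]].
  by split; [|left].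
by split=> //; right; split=> // S sccS; apply: IH (recS S sccS).
Qed.

Lemma scc_rec_set0 base n G : args G = set0 -> scc_rec base n.+1 G set0.
Proof.
move=> argsG; split; first by rewrite argsG.
have no_scc S : ~ is_scc G S.
  by case=> /set0Pn[a Sa] + _ _; rewrite argsG => /subsetP/(_ a Sa); rewrite inE.
by right; split=> [[S [/no_scc]]|S /no_scc].
Qed.

Lemma attacks_restrict G S a c :
  attacks (restrict G S) a c = [&& attacks G a c, a \in S & c \in S].
Proof. by rewrite /attacks inE. Qed.

Lemma restrict_args_wf G : wf_AF G -> restrict G (args G) = G.
Proof.
case: G => A att wfG; congr mkAF; apply/setP => -[u v].
by rewrite inE; case: (boolP ((u, v) \in att)) => // /(subsetP wfG); rewrite in_setX.
Qed.

Lemma UPset_args G E : UPset G (args G) E = args G.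
Proof.
apply/setP => z; rewrite /UPset /Dset in_setD inE andbC; case: (z \in args G) => //=.
by apply/existsP => -[c /andP[/setIP[_]]]; rewrite inE; case: (c \in args G).
Qed.

Lemma UPset1 G X x : ~~ attacks G x x -> (forall c, attacks G c x -> c \in args G) ->
  UPset G [set x] X = if [exists c in X, attacks G c x] then set0 else [set x].
Proof.
move=> not_xx attG.
have attackers_out : [exists c in X :&: out_attackers G [set x], attacks G c x] =
                     [exists c in X, attacks G c x].
  apply/existsP/existsP => [[c /andP[/setIP[Xc _] cx]]|[c /andP[Xc cx]]].
    by exists c; rewrite Xc.
  exists c; rewrite !inE Xc attG //= cx andbT.
  apply/andP; split; first by apply: contraNneq not_xx => eq_cx; rewrite -{1}eq_cx.
  by apply/existsP; exists x; rewrite inE eqxx.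
apply/setP => z; rewrite /UPset /Dset in_setD !inE.
case: (eqVneq z x) => [->|neq_zx]; last by case: ifP; rewrite !inE ?andbF ?(negbTE neq_zx).
by rewrite /= attackers_out; case: ifP; rewrite !inE ?eqxx.
Qed.

Lemma out_attackersP G S c :
  reflect [/\ c \in args G, c \notin S & exists2 b, b \in S & attacks G c b]
          (c \in out_attackers G S).
Proof.
rewrite inE; apply: (iffP and3P) => [[Gc notSc /existsP[b /andP[Sb cb]]]|[Gc notSc [b Sb cb]]].
  by split=> //; exists b.
by split=> //; apply/existsP; exists b; rewrite Sb.
Qed.

Lemma eq_UPset G S E E' : E :&: out_attackers G S = E' :&: out_attackers G S ->
  UPset G S E = UPset G S E'.
Proof. by rewrite /UPset /Dset => ->. Qed.

Lemma ancestors_out_attacker G S s c : is_scc G S -> s \in S ->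
  c \in out_attackers G S -> attacks G c s -> #|ancestors G c| < #|ancestors G s|.
Proof.
move=> sccS Ss /out_attackersP[Gc notSc _] cs; apply: proper_card.
have Gs : s \in args G by case: sccS => _ /subsetP->.
apply: ancestors_proper; first exact: reachableb_attack (reachableb_refl Gc) cs Gc Gs.
apply: contra notSc => sc; rewrite (is_sccE sccS Ss) inE Gc /mreachableb sc.
exact: reachableb_attack (reachableb_refl Gc) cs Gc Gs.
Qed.

Definition scc_base_ok (base : AF T -> {set T} -> Prop) :=
  (forall G x (X : {set T}), args G = [set x] -> ~~ attacks G x x -> base G X -> X = [set x]) /\
  (forall G, exists2 X : {set T}, X \subset args G & base G X).

Variable base : AF T -> {set T} -> Prop.

(* Extensions on the SCCs with fewer than [k] ancestors; attackers of an SCC have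
   fewer ancestors than its members, so its UP-set is fixed before its turn. *)
Definition scc_rec_upto G k E :=
  [/\ E \subset args G, {in E, forall a, #|ancestors G a| < k} &
      forall S, is_scc G S -> {in S, forall s, #|ancestors G s| < k} ->
        scc_rec base #|args G| (restrict G (UPset G S E)) (E :&: S)].

Section Step.
Variable G : AF T.
Hypothesis not_single : ~ single_scc G.
Hypothesis IH : forall H, #|args H| < #|args G| -> exists E, scc_rec base #|args H|.+1 H E.

Lemma scc_rec_upto0 : scc_rec_upto G 0 set0.
Proof.
split=> [|a|S [/set0Pn[s Ss] _ _ _] /(_ s Ss)//]; first exact: sub0set.
by rewrite inE.
Qed.

Lemma exists_scc_rec_UPset E S : is_scc G S ->
  exists2 X : {set T}, X \subset S & scc_rec base #|args G| (restrict G (UPset G S E)) X.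
Proof.
move=> sccS; have ltUP : #|args (restrict G (UPset G S E))| < #|args G|.
  exact: leq_ltn_trans (subset_leq_card (subsetDl _ _)) (is_scc_proper sccS not_single).
have [X recX] := IH ltUP; exists X; first exact: subset_trans (scc_rec_sub recX) (subsetDl _ _).
exact: scc_rec_mono recX.
Qed.

Lemma scc_rec_uptoS k E : scc_rec_upto G k E -> exists E', scc_rec_upto G k.+1 E'.
Proof.
case=> EG rkE recE.
have [XS XSP] : exists XS : {set T} -> {set T}, forall S, is_scc G S ->
    XS S \subset S /\ scc_rec base #|args G| (restrict G (UPset G S E)) (XS S).
  apply: (functional_choice (fun S X => is_scc G S ->
    X \subset S /\ scc_rec base #|args G| (restrict G (UPset G S E)) X)) => S.
  have [sccS|not_scc] := classic (is_scc G S); last by exists set0.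
  by have [X sXS recX] := exists_scc_rec_UPset E sccS; exists X.
pose Ek := [set a in args G | (#|ancestors G a| == k) && (a \in XS (scc_of G a))].
exists (E :|: Ek); split.
- by rewrite subUset EG; apply/subsetP => a /setIdP[].
- by move=> a /setUP[/rkE/ltnW|/setIdP[_ /andP[/eqP-> _]]].
move=> S sccS rkS.
have Ek_out : Ek :&: out_attackers G S = set0.
  apply/setP => c; rewrite in_setI in_set0; apply/negP => /andP[+ out_c].
  rewrite inE => /and3P[_ /eqP rkc _].
  have /out_attackersP[_ _ [s Ss cs]] := out_c.
  by have := ancestors_out_attacker sccS Ss out_c cs; rewrite rkc ltnNge -ltnS rkS.
have -> : UPset G S (E :|: Ek) = UPset G S E by apply: eq_UPset; rewrite setIUl Ek_out setU0.
have [rk_lt|rk_k] := classic {in S, forall s, #|ancestors G s| < k}.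
  have -> : (E :|: Ek) :&: S = E :&: S.
    apply/setP => a; rewrite !inE; case Sa: (a \in S); rewrite ?andbF ?andbT //.
    by rewrite (ltn_eqF (rk_lt a Sa)) /= andbF orbF.
  exact: recE.
have [s Ss rk_s] : exists2 s, s \in S & #|ancestors G s| = k.
  apply: NNPP => no_s; apply: rk_k => s Ss.
  by rewrite ltn_neqAle -ltnS rkS // andbT; apply/eqP => rk_s; apply: no_s; exists s.
have rkS_k : {in S, forall z, #|ancestors G z| = k}.
  by move=> z Sz; rewrite (ancestors_scc sccS Sz Ss).
have [sXS recXS] := XSP S sccS.
have -> : (E :|: Ek) :&: S = XS S; last by [].
apply/setP => a; rewrite !inE; case Sa: (a \in S); last first.
  by rewrite andbF; apply/esym/negbTE; apply: contraFN Sa; apply: (subsetP sXS).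
have Ga : a \in args G by case: sccS => _ /subsetP->.
have notEa : a \notin E by apply/negP => /rkE; rewrite rkS_k // ltnn.
by rewrite (negbTE notEa) Ga rkS_k // eqxx -(is_sccE sccS Sa) andbT.
Qed.

End Step.

Lemma exists_scc_rec : scc_base_ok base -> forall G, exists E, scc_rec base #|args G|.+1 G E.
Proof.
case=> _ base_exists G; move: {2}#|args G|.+1 (ltnSn #|args G|) => n.
elim: n G => [//|n IHn] G ltGn.
have [single|not_single] := classic (single_scc G).
  by have [X XG baseX] := base_exists G; exists X; split=> //; left.
have IH H : #|args H| < #|args G| -> exists E, scc_rec base #|args H|.+1 H E.
  by move=> ltHG; apply: IHn; apply: leq_trans ltHG _.
have [E [EG _ recE]] : exists E, scc_rec_upto G #|T|.+1 E.
  elim: #|T|.+1 => [|k [E /(scc_rec_uptoS not_single IH)//]].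
  by exists set0; apply: scc_rec_upto0.
exists E; split=> //; right; split=> // S sccS; apply: recE => // s _.
by rewrite ltnS max_card.
Qed.

End SccRecursion.

Lemma naive_scc_base_ok (T : finType) : scc_base_ok (@naive T).
Proof.
split=> [G x X argsG not_xx [[XG _] maxX]|G]; last first.
  by have [X naiveX] := exists_naive G; exists X => //; case: naiveX => [[]].
apply/esym/maxX; last by rewrite -argsG.
by split=> [|u v]; rewrite ?argsG // !inE => /eqP-> /eqP->.
Qed.

Lemma stage_scc_base_ok (T : finType) : scc_base_ok (@stage T).
Proof.
split=> [G x X argsG not_xx [[XG _] maxX]|G]; last first.
  by have [X stageX] := exists_stage G; exists X => //; case: stageX => [[]].
have cf1 : conflict_free G [set x].
  by split=> [|u v]; rewrite ?argsG // !inE => /eqP-> /eqP->.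
have [Xx|notXx] := boolP (x \in X).
  by apply/eqP; rewrite eqEsubset sub1set Xx andbT -argsG.
have X0 : X = set0.
  apply/setP => z; rewrite inE; apply: contraNF notXx => Xz.
  by have := subsetP XG z Xz; rewrite argsG inE => /eqP <-.
exfalso; apply: maxX; exists [set x]; split=> //.
rewrite X0 properE; apply/andP; split.
  by apply/subsetP => z; rewrite !inE => /existsP[a]; rewrite inE.
by apply/subsetP => /(_ x); rewrite !inE eqxx => /(_ isT) /existsP[a]; rewrite inE.
Qed.

Section RankedUpsets.
Variable T : finType.
Implicit Types (G : AF T) (W X Y A B : {set T}) (rk : T -> nat) (a x y z : T).

Definition ranked_upset G W rk := W \subset args G /\
  forall x y, x \in W -> attacks G y x -> y \in W /\ rk y < rk x.

Definition stable_on G W X :=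
  forall x, x \in W -> (x \in X <-> forall y, attacks G y x -> y \notin X).

Lemma ranked_ind W rk (P : T -> Prop) :
  (forall x, x \in W -> (forall y, y \in W -> rk y < rk x -> P y) -> P x) ->
  forall x, x \in W -> P x.
Proof.
move=> IH x; move: {2}(rk x).+1 (ltnSn (rk x)) => n; elim: n x => [//|n IHn] x ltxn Wx.
by apply: IH => // y Wy ltyx; apply: IHn => //; apply: leq_trans ltyx _.
Qed.

Section RankedUpset.
Variables (G : AF T) (W : {set T}) (rk : T -> nat).
Hypothesis upW : ranked_upset G W rk.

Lemma ranked_upset_path a p : path (attack_edge G) a p -> last a p \in W ->
  a \in W /\ (p != [::] -> rk a < rk (last a p)).
Proof.
case: upW => _ rkW; elim: p a => [|y p IH] a //= /andP[/and3P[ay _ _] yp] Wl.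
have [Wy lt_y] := IH y yp Wl; have [Wa lt_ay] := rkW y a Wy ay.
split=> // _; case: p {yp Wl IH} lt_y => [//|u p] lt_y.
exact: ltn_trans lt_ay (lt_y isT).
Qed.

Lemma ranked_upset_reachable a x : reachableb G a x -> x \in W -> a != x ->
  a \in W /\ rk a < rk x.
Proof.
case/andP=> _ /connectP[p ap ->] Wl neq; have [Wa lt] := ranked_upset_path ap Wl.
by split=> //; apply: lt; apply: contraNneq neq => p0; rewrite p0.
Qed.

Lemma ranked_upset_scc_of x : x \in W -> scc_of G x = [set x].
Proof.
move=> Wx; apply/setP => z; rewrite in_set1; apply/idP/idP => [|/eqP->]; last first.
  by rewrite mem_scc_of ?(subsetP (proj1 upW)).
rewrite inE => /and3P[_ xz zx]; apply: contraT => neq_zx.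
have [Wz lt_zx] := ranked_upset_reachable zx Wx neq_zx.
have [_ lt_xz] := ranked_upset_reachable xz Wz (ltac:(by rewrite eq_sym)).
by have := ltn_trans lt_zx lt_xz; rewrite ltnn.
Qed.

Lemma ranked_upset_noself x : x \in W -> ~~ attacks G x x.
Proof. by move=> Wx; apply/negP => xx; have [_] := proj2 upW x x Wx xx; rewrite ltnn. Qed.

Lemma stable_on_uniq X Y : stable_on G W X -> stable_on G W Y -> {in W, X =i Y}.
Proof.
move=> stX stY; apply: (@ranked_ind W rk) => x Wx IH.
have [_ rkW] := upW; apply/idP/idP => [/(stX x Wx) noX|/(stY x Wx) noY].
  by apply/(stY x Wx) => y yx; have [Wy lt] := rkW x y Wx yx; rewrite -IH ?noX.
by apply/(stX x Wx) => y yx; have [Wy lt] := rkW x y Wx yx; rewrite IH ?noY.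
Qed.

Lemma complete_stable_on X : complete G X -> stable_on G W X.
Proof.
case: upW => WG rkW [[[_ cfX] _] maxX]; apply: (@ranked_ind W rk) => x Wx IH; split.
  by move=> Xx y yx; apply: contraTN yx => Xy; apply: cfX.
move=> noX; apply: maxX; first exact: (subsetP WG).
move=> y yx; have [Wy lt] := rkW x y Wx yx.
apply: NNPP => not_def; move/negP: (noX y yx); apply; apply/(IH y Wy lt) => z zy.
by apply/negP => Xz; apply: not_def; exists z.
Qed.

Lemma conflict_free_agree_on A B : conflict_free G A -> conflict_free G B ->
  (forall x, x \in W -> x \in A -> x \notin B -> exists2 y, y \in B & attacks G y x) ->
  (forall x, x \in W -> x \in B -> x \notin A -> exists2 y, y \in A & attacks G y x) ->
  {in W, A =i B}.
Proof.
case: upW => _ rkW [_ cfA] [_ cfB] defAB defBA; apply: (@ranked_ind W rk) => x Wx IH.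
apply/idP/idP => [Ax|Bx]; apply: contraT => notx.
  have [y By yx] := defAB x Wx Ax notx; have [Wy lt] := rkW x y Wx yx.
  by move: (cfA y x); rewrite IH // yx => /(_ By Ax).
have [y Ay yx] := defBA x Wx Bx notx; have [Wy lt] := rkW x y Wx yx.
by move: (cfB y x); rewrite -IH // yx => /(_ Ay Bx).
Qed.

Lemma scc_rec_stable_on base n X : scc_base_ok base -> scc_rec base n G X ->
  stable_on G W X.
Proof.
case: upW => WG rkW [base1 _]; case: n => [//|n] [XG rec] x Wx.
have Gx := subsetP WG x Wx; have not_xx := ranked_upset_noself Wx.
case: rec => [[single baseX]|[not_single recS]].
  have argsG : args G = [set x] by rewrite -(single_sccE single Gx) ranked_upset_scc_of.
  rewrite (base1 _ _ _ argsG not_xx baseX) set11; split=> // _ y; rewrite inE.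
  by apply: contraTN => /eqP->.
have := recS _ (is_scc_scc_of Gx); rewrite ranked_upset_scc_of // UPset1 //; last first.
  by move=> c cx; have [Wc _] := rkW x c Wx cx; apply: (subsetP WG).
case: existsP => [[c /andP[Xc cx]] /scc_rec_sub|no_att].
  rewrite subset0 => /eqP/setP/(_ x); rewrite !inE eqxx andbT => notXx.
  by rewrite notXx; split=> // /(_ c cx); rewrite Xc.
case: n {recS} => [[]|n] [_ [[_ baseX]|[not_single1 _]]]; last first.
  by case: not_single1; apply: (@single_scc1 _ _ x).
have -> : x \in X.
  have not_xx' : ~~ attacks (restrict G [set x]) x x.
    by rewrite attacks_restrict (negbTE not_xx).
  have := base1 _ x _ (erefl : args (restrict G [set x]) = _) not_xx' baseX.
  by move/setP/(_ x); rewrite !inE eqxx andbT.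
by split=> // _ y yx; apply/negP => Xy; apply: no_att; exists y; rewrite Xy.
Qed.

End RankedUpset.
End RankedUpsets.

Section RationalExpansion.
Variable T : finType.
Variables F F' : AF T.
Hypotheses (wfF : wf_AF F) (wfF' : wf_AF F') (rmFF' : rm_exp F F').
Implicit Types (A B C E P S X : {set T}) (a b c u v x y z : T).

Definition new_args := args F' :\: args F.

Definition reaching_new :=
  [set x in args F' | [exists b in new_args, reachableb F' x b]].

Definition defeats_new A := A \subset args F /\
  forall b, b \in new_args -> exists2 c, c \in A & attacks F' c b.

Lemma args_expand : args F \subset args F'.
Proof. by case: rmFF' => [[]]. Qed.

Lemma attacks_expand a b : attacks F a b -> attacks F' a b.
Proof. by case: rmFF' => [[_ [/subsetP sub _]]] _ _; apply: sub. Qed.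

Lemma attacks_old a b : a \in args F -> b \in args F -> attacks F' a b = attacks F a b.
Proof.
move=> Fa Fb; apply/idP/idP => [ab'|]; last exact: attacks_expand.
apply: contraT => ab; case: rmFF' => [[_ [_ /(_ a b ab' ab) not_old]]] _ _.
by case: not_old.
Qed.

Lemma new_not_in_cycle b : b \in new_args -> ~ in_some_cycle F' b.
Proof.
rewrite in_setD => /andP[notFb _] [s [cycle_s s_b]].
case: rmFF' => _ /(_ s)/proj2/(_ cycle_s) cycleF_s _.
case: s cycle_s s_b cycleF_s => [//|u r] _ s_b [_ _ _ _ /allP/(_ b s_b)].
by rewrite (negbTE notFb).
Qed.

Lemma reaching_new_not_in_cycle x : x \in reaching_new -> ~ in_some_cycle F' x.
Proof.
rewrite inE => /andP[F'x /existsP[b /andP[new_b xb]]].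
have [Fx|notFx] := boolP (x \in args F); last by apply: new_not_in_cycle; rewrite in_setD notFx.
by case: rmFF' => _ _ /(_ x b Fx new_b); apply; apply/reachableP.
Qed.

Lemma new_reaching_new b : b \in new_args -> b \in reaching_new.
Proof.
move=> new_b; have /setDP[F'b _] := new_b.
by rewrite inE F'b; apply/existsP; exists b; rewrite new_b reachableb_refl.
Qed.

Lemma reaching_new_attacker x y : x \in reaching_new -> attacks F' y x -> y \in reaching_new.
Proof.
move=> Ux yx; have [F'y F'x] := wf_attacks wfF' yx.
move: Ux; rewrite !inE F'y => /andP[_ /existsP[b /andP[new_b xb]]].
apply/existsP; exists b; rewrite new_b (reachableb_trans _ xb) //.
exact: reachableb_attack (reachableb_refl F'y) yx F'y F'x.
Qed.

Lemma ranked_upset_reaching_new :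
  ranked_upset F' reaching_new (fun x => #|ancestors F' x|).
Proof.
split=> [|x y Ux yx]; first by apply/subsetP => x /setIdP[].
have [F'y F'x] := wf_attacks wfF' yx; split; first exact: reaching_new_attacker yx.
apply/proper_card/ancestors_proper; first exact: reachableb_attack (reachableb_refl F'y) yx F'y F'x.
apply/negP => xy; exact: reaching_new_not_in_cycle Ux (reachable_attacker_in_cycle xy yx).
Qed.

Lemma ranked_upset_reaching_new_old :
  ranked_upset F (reaching_new :&: args F) (fun x => #|ancestors F' x|).
Proof.
split=> [|x y /setIP[Ux Fx] yx]; first exact: subsetIr.
have [Uy lt_yx] := proj2 ranked_upset_reaching_new x y Ux (attacks_expand yx).
by rewrite in_setI Uy (proj1 (wf_attacks wfF yx)).
Qed.

Lemma complete_agree C X : complete F' C -> complete F' X -> {in reaching_new, C =i X}.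
Proof.
move=> compC compX; have upU := ranked_upset_reaching_new.
exact: (stable_on_uniq upU (complete_stable_on upU compC) (complete_stable_on upU compX)).
Qed.

Lemma conflict_free_expand A : A \subset args F ->
  conflict_free F A <-> conflict_free F' A.
Proof.
move=> sAF; split=> [[_ cfA]|[_ cfA]].
  split=> [|u v Au Av]; first exact: subset_trans sAF args_expand.
  by rewrite attacks_old ?(subsetP sAF) ?cfA.
by split=> // u v Au Av; rewrite -attacks_old ?(subsetP sAF) ?cfA.
Qed.

Lemma acceptable_expand A a : defeats_new A -> a \in args F ->
  acceptable F a A <-> acceptable F' a A.
Proof.
move=> [sAF defA] Fa; split=> accA u ua.
  have [Fu|notFu] := boolP (u \in args F).
    rewrite attacks_old // in ua; have [c Ac cu] := accA u ua.
    by exists c; rewrite // attacks_old ?(subsetP sAF c Ac).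
  by apply: defA; rewrite in_setD notFu (proj1 (wf_attacks wfF' ua)).
have [Fu _] := wf_attacks wfF ua; have [c Ac cu] := accA u (attacks_expand ua).
by exists c; rewrite // -attacks_old ?(subsetP sAF c Ac).
Qed.

Lemma admissible_expand A : defeats_new A -> admissible F A <-> admissible F' A.
Proof.
move=> defA; have [sAF _] := defA.
split=> [[cfA accA]|[cfA accA]]; split=> [|a Aa].
- exact/(conflict_free_expand sAF).
- exact/(acceptable_expand defA (subsetP sAF a Aa))/accA.
- exact/(conflict_free_expand sAF).
- exact/(acceptable_expand defA (subsetP sAF a Aa))/accA.
Qed.

Lemma complete_expand A : defeats_new A -> complete F A <-> complete F' A.
Proof.
move=> defA; have [sAF defA'] := defA.
split=> [[admA maxA]|[admA maxA]]; split=> [|a Ga acc_a].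
- exact/(admissible_expand defA).
- have [Fa|notFa] := boolP (a \in args F).
    exact/maxA/(acceptable_expand defA Fa).
  have [c Ac ca] := defA' a (ltac:(by rewrite in_setD notFa)).
  have [d Ad dc] := acc_a c ca; have [[_ cfA] _] := admA.
  by move: (cfA d c Ad Ac); rewrite -attacks_old ?(subsetP sAF) ?dc.
- exact/(admissible_expand defA).
- by apply: maxA; [apply: (subsetP args_expand)|apply/(acceptable_expand defA Ga)].
Qed.

Lemma range_sub_args A : A \subset args F -> range F A \subset args F.
Proof.
by move=> sAF; apply/subsetP => x /rangeP[/(subsetP sAF)//|[a _ /(wf_attacks wfF)[]]].
Qed.

Lemma range_expand A x : defeats_new A ->
  (x \in range F' A) = (x \in range F A) || (x \in new_args).
Proof.
move=> [sAF defA]; apply/rangeP/orP.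
  case=> [Ax|[a Aa ax]]; first by left; apply/rangeP; left.
  have [Fx|notFx] := boolP (x \in args F).
    by left; apply/rangeP; right; exists a; rewrite // -attacks_old ?(subsetP sAF a Aa).
  by right; rewrite in_setD notFx (proj2 (wf_attacks wfF' ax)).
case=> [/rangeP[Ax|[a Aa ax]]|new_x]; [by left|right|right; exact: defA].
by exists a; rewrite // attacks_expand.
Qed.

Lemma stable_on_old C : C \subset args F -> stable_on F' reaching_new C ->
  stable_on F (reaching_new :&: args F) C.
Proof.
move=> sCF stC x /setIP[Ux Fx]; rewrite (stC x Ux); split=> noC y yx.
  exact/noC/attacks_expand.
apply/negP => Cy; have Fy := subsetP sCF y Cy.
by move: (noC y); rewrite -attacks_old // yx Cy => /(_ isT).
Qed.

Lemma defeats_new_stable_on E C : E \subset args F ->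
  stable_on F (reaching_new :&: args F) E -> stable_on F (reaching_new :&: args F) C ->
  defeats_new C -> defeats_new E.
Proof.
move=> sEF stE stC [sCF defC]; split=> // b new_b; have [c Cc cb] := defC b new_b.
have Uc := reaching_new_attacker (new_reaching_new new_b) cb.
have UFc : c \in reaching_new :&: args F by rewrite inE Uc (subsetP sCF).
by exists c; rewrite // (stable_on_uniq ranked_upset_reaching_new_old stE stC UFc).
Qed.

Lemma defeats_newS A B : defeats_new A -> A \subset B -> B \subset args F -> defeats_new B.
Proof.
move=> [_ defA] sAB sBF; split=> // b new_b.
by have [c Ac cb] := defA b new_b; exists c; rewrite ?(subsetP sAB).
Qed.

Lemma range_expand_subE X Y : defeats_new X -> defeats_new Y ->
  (range F' X \subset range F' Y) = (range F X \subset range F Y).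
Proof.
move=> defX defY; apply/subsetP/subsetP => sub x.
  move=> Xx; have := sub x; rewrite !range_expand // Xx => /(_ isT) /orP[//|].
  by rewrite in_setD (subsetP (range_sub_args (proj1 defX)) x Xx).
by rewrite !range_expand // => /orP[/sub->//|->]; rewrite orbT.
Qed.

Lemma range_expand_eqE X Y : defeats_new X -> defeats_new Y ->
  (range F' X == range F' Y) = (range F X == range F Y).
Proof. by move=> defX defY; rewrite !eqEsubset !range_expand_subE. Qed.

Lemma range_expand_sub A : range F A \subset range F' A.
Proof.
apply/subsetP => x /rangeP[Ax|[a Aa ax]]; apply/rangeP; first by left.
by right; exists a; rewrite // attacks_expand.
Qed.

Lemma range_expand_old A x : A \subset args F -> x \in args F ->
  x \in range F' A -> x \in range F A.
Proof.
move=> sAF Fx /rangeP[Ax|[a Aa ax]]; apply/rangeP; first by left.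
by right; exists a; rewrite // -attacks_old ?(subsetP sAF a Aa).
Qed.

Lemma range_expand_agree S E : conflict_free F S -> conflict_free F E ->
  range F S = range F E -> range F' S \subset range F' E.
Proof.
move=> cfS cfE eqSE.
have sSE : range F S \subset range F E by rewrite eqSE.
have sES : range F E \subset range F S by rewrite eqSE.
have agree := conflict_free_agree_on ranked_upset_reaching_new_old cfS cfE
  (fun x _ => range_sub_attacked sSE) (fun x _ => range_sub_attacked sES).
apply/subsetP => x /rangeP[Sx|[s Ss sx]].
  by apply: (subsetP (range_expand_sub E)); rewrite -eqSE; apply/rangeP; left.
have Fs := subsetP (proj1 cfS) s Ss.
have [Fx|notFx] := boolP (x \in args F).
  apply: (subsetP (range_expand_sub E)); rewrite -eqSE.
  by apply: range_expand_old (proj1 cfS) Fx _; apply/rangeP; right; exists s.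
have new_x : x \in new_args by rewrite in_setD notFx (proj2 (wf_attacks wfF' sx)).
have Us := reaching_new_attacker (new_reaching_new new_x) sx.
by apply/rangeP; right; exists s; rewrite // -(agree s) // in_setI Us Fs.
Qed.

Lemma stage_expand E : stage F E ->
  exists E', stage F' E' /\ (~~ (E' \subset args F) \/ E' = E).
Proof.
move=> [cfE maxE]; have sEF := proj1 cfE; have cfE' := proj1 (conflict_free_expand sEF) cfE.
have [S stS sES'] := exists_stage_above cfE'.
have [sSF|notSF] := boolP (S \subset args F); last by exists S; split=> //; left.
have cfS := proj2 (conflict_free_expand sSF) (proj1 stS).
have sES : range F E \subset range F S.
  apply/subsetP => x Ex; apply: range_expand_old sSF (subsetP (range_sub_args sEF) x Ex) _.
  exact: subsetP sES' x (subsetP (range_expand_sub E) x Ex).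
have eqSE : range F S = range F E.
  apply/eqP; rewrite eqEsubset sES andbT; apply: contraT => not_sSE.
  by case: maxE; exists S; split; rewrite // properE sES.
have eqSE' : range F' S = range F' E.
  by apply/eqP; rewrite eqEsubset sES' range_expand_agree.
exists E; split; last by right.
by split=> // [[S' [cfS' ltES']]]; case: (proj2 stS); exists S'; rewrite eqSE'.
Qed.

Lemma reachableb_expand a z : reachableb F a z -> reachableb F' a z.
Proof.
case/andP=> Fa az; rewrite /reachableb (subsetP args_expand) //=.
apply: connect_sub az => u v /and3P[uv Fu Fv]; apply: connect1.
by rewrite /attack_edge attacks_expand ?(subsetP args_expand).
Qed.

Lemma reachableb_old a z : a \in args F -> in_some_cycle F' a ->
  reachableb F' a z -> reachableb F a z.
Proof.
move=> Fa cycle_a az; have [F'a /connectP[p ap ->]] := andP az.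
have reach_old w : reachableb F' a w -> w \in args F.
  move=> aw; apply: contraT => notFw; case: rmFF' => _ _ /(_ a w Fa).
  by rewrite in_setD notFw (reachableb_args aw) => /(_ isT) /(_ (proj2 (reachableP _ _ _) aw)).
have Fp : all (fun x => x \in args F) p.
  apply/allP => w pw; apply: reach_old; rewrite /reachableb F'a.
  by apply: (path_connect ap); rewrite inE pw orbT.
rewrite /reachableb Fa; apply/connectP; exists p => //.
apply: attacks_path_edge => //; elim: p a Fa ap Fp {az reach_old cycle_a F'a} => //= y p IH a Fa.
case/andP=> /and3P[ay _ _] yp /andP[Fy Fp].
by rewrite -attacks_old // ay IH.
Qed.

Lemma scc_of_old a : a \in args F -> scc_of F' a = scc_of F a.
Proof.
move=> Fa; apply/setP => z; rewrite !inE; apply/idP/idP; last first.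
  by case/and3P=> Fz az za; rewrite (subsetP args_expand) //= /mreachableb !reachableb_expand.
case/and3P=> F'z az za; have [<-|neq_az] := eqVneq a z.
  by rewrite Fa /mreachableb reachableb_refl.
have cycle_a := mutually_reachable_in_cycle az za neq_az.
have cycle_z := mutually_reachable_in_cycle za az (ltac:(by rewrite eq_sym)).
have Fz : z \in args F.
  apply: contraT => notFz; have new_z : z \in new_args by rewrite in_setD notFz.
  by case: (new_not_in_cycle new_z cycle_z).
by rewrite Fz /mreachableb !reachableb_old.
Qed.

Lemma scc_of_new b : b \in new_args -> scc_of F' b = [set b].
Proof.
move=> new_b; have /setDP[F'b _] := new_b.
apply/setP => z; rewrite in_set1; apply/idP/idP => [|/eqP->]; last exact: mem_scc_of.
rewrite inE => /and3P[_ bz zb]; apply: contraT => neq_zb.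
by case: (new_not_in_cycle new_b); apply: mutually_reachable_in_cycle bz zb _; rewrite eq_sym.
Qed.

Lemma restrict_expand X : X \subset args F -> restrict F' X = restrict F X.
Proof.
move=> sXF; congr mkAF; apply/setP => -[u v]; rewrite !inE /=.
have [Xu|] := boolP (u \in X); have [Xv|] := boolP (v \in X); rewrite ?andbF //= !andbT.
exact: (attacks_old (subsetP sXF u Xu) (subsetP sXF v Xv)).
Qed.

Lemma out_attackers_expand S c : S \subset args F -> c \in args F ->
  (c \in out_attackers F' S) = (c \in out_attackers F S).
Proof.
move=> sSF Fc; rewrite !inE Fc (subsetP args_expand) //=; congr (_ && _).
apply: eq_existsb => b; have [Sb|//] := boolP (b \in S).
by rewrite /= attacks_old ?(subsetP sSF b Sb).
Qed.

Lemma UPset_expand S E : S \subset args F -> E \subset args F ->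
  UPset F' S E = UPset F S E.
Proof.
move=> sSF sEF; rewrite /UPset /Dset; congr (_ :\: _); apply/setP => a; rewrite !inE.
have [Sa|//] := boolP (a \in S); apply: eq_existsb => c; rewrite !in_setI.
have [Ec|//] := boolP (c \in E); have Fc := subsetP sEF c Ec.
by rewrite /= out_attackers_expand // attacks_old ?(subsetP sSF a Sa).
Qed.

Lemma expansion_no_new : new_args = set0 -> F' = F.
Proof.
move=> no_new; have eq_args : args F' = args F.
  apply/eqP; rewrite eqEsubset args_expand andbT; apply/subsetP => z F'z.
  by apply: contraT => notFz; rewrite -(in_set0 z) -no_new in_setD notFz F'z.
rewrite -(restrict_args_wf wfF') -[RHS](restrict_args_wf wfF) eq_args.
exact: restrict_expand.
Qed.

Lemma not_single_scc_expand a b : a \in args F -> b \in new_args -> ~ single_scc F'.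
Proof.
move=> Fa new_b single; have /setDP[F'b notFb] := new_b.
have := single_sccE single F'b; rewrite scc_of_new // => eq_args.
by move: (subsetP args_expand a Fa); rewrite -eq_args inE => /eqP eq_ab; rewrite -eq_ab Fa in notFb.
Qed.

Lemma scc_rec_new_scc base n E b : 0 < n -> defeats_new E -> b \in new_args ->
  scc_rec base n (restrict F' (UPset F' (scc_of F' b) E)) (E :&: scc_of F' b).
Proof.
case: n => // n _ [sEF defE] new_b; have /setDP[F'b notFb] := new_b.
have not_bb : ~~ attacks F' b b.
  apply/negP => bb; apply: (new_not_in_cycle new_b).
  exact: reachable_attacker_in_cycle (reachableb_refl F'b) bb.
rewrite scc_of_new // UPset1 //; last by move=> c /(wf_attacks wfF')[].
have [c Ec cb] := defE b new_b; have -> : [exists c in E, attacks F' c b].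
  by apply/existsP; exists c; rewrite Ec.
have -> : E :&: [set b] = set0.
  apply/setP => z; rewrite !inE; apply: contraNF notFb => /andP[Ez /eqP<-].
  exact: (subsetP sEF).
exact: scc_rec_set0.
Qed.

Lemma scc_rec_old_scc base E a : a \in args F -> #|args F| < #|args F'| ->
  scc_rec base #|args F|.+1 F E ->
  scc_rec base #|args F'| (restrict F' (UPset F' (scc_of F' a) E)) (E :&: scc_of F' a).
Proof.
move=> Fa lt_FF' recE; have sEF := scc_rec_sub recE.
have sccFa := is_scc_scc_of Fa; have [_ sSF _ _] := sccFa.
rewrite scc_of_old // UPset_expand // restrict_expand; last exact: subset_trans (subsetDl _ _) sSF.
have [_ [[single _]|[_ recS]]] := recE; last exact: scc_rec_mono (ltnW lt_FF') (recS _ sccFa).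
rewrite single_sccE // UPset_args restrict_args_wf // (setIidPl sEF).
exact: scc_rec_mono lt_FF' recE.
Qed.

Lemma scc_rec_expand base E : defeats_new E ->
  scc_rec base #|args F|.+1 F E -> scc_rec base #|args F'|.+1 F' E.
Proof.
move=> defE recE; have [sEF defE'] := defE.
have [/expansion_no_new->//|/set0Pn[b new_b]] := eqVneq new_args set0.
have [a Ea ab] := defE' b new_b; have Fa := subsetP sEF a Ea; have /setDP[F'b notFb] := new_b.
have lt_FF' : #|args F| < #|args F'|.
  by apply: proper_card; rewrite properE args_expand; apply/subsetPn; exists b.
split; first exact: subset_trans sEF args_expand.
right; split=> [|S sccS]; first exact: not_single_scc_expand Fa new_b.
have [/set0Pn[z Sz] sSF' _ _] := sccS; rewrite (is_sccE sccS Sz).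
have [Fz|notFz] := boolP (z \in args F); first exact: scc_rec_old_scc.
by apply: scc_rec_new_scc; rewrite ?(leq_ltn_trans _ lt_FF') // in_setD notFz (subsetP sSF').
Qed.

Section NoNewAccepted.
Variable C0 : {set T}.
Hypotheses (compC0 : complete F' C0) (sC0F : C0 \subset args F).

Lemma complete_defeats_new X : complete F' X -> defeats_new X.
Proof.
move=> compX; have stX := complete_stable_on ranked_upset_reaching_new compX.
have notX b : b \in new_args -> b \notin X.
  move=> new_b; rewrite -(complete_agree compC0 compX (new_reaching_new new_b)).
  by apply: contraNN (subsetP sC0F b) (proj2 (setDP new_b)).
split=> [|b new_b].
  apply/subsetP => x Xx; have [[[sXF' _] _] _] := compX; have F'x := subsetP sXF' x Xx.
  by apply: contraTT Xx => notFx; apply: notX; rewrite in_setD notFx F'x.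
apply: NNPP => no_att; move/negP: (notX b new_b); apply.
by apply/(stX b (new_reaching_new new_b)) => y yb; apply/negP => Xy; apply: no_att; exists y.
Qed.

Lemma stable_on_C0 : stable_on F (reaching_new :&: args F) C0.
Proof. exact: stable_on_old sC0F (complete_stable_on ranked_upset_reaching_new compC0). Qed.

Lemma stable_on_defeats_new E : E \subset args F ->
  stable_on F (reaching_new :&: args F) E -> defeats_new E.
Proof.
by move=> sEF stE; apply: defeats_new_stable_on sEF stE stable_on_C0 (complete_defeats_new compC0).
Qed.

Lemma complete_old_defeats_new E : complete F E -> defeats_new E.
Proof.
move=> compE; have [[[sEF _] _] _] := compE.
exact: stable_on_defeats_new sEF (complete_stable_on ranked_upset_reaching_new_old compE).
Qed.

Lemma scc_rec_defeats_new base n E : scc_base_ok base -> scc_rec base n F E -> defeats_new E.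
Proof.
move=> base_ok recE; apply: stable_on_defeats_new (scc_rec_sub recE) _.
exact: (scc_rec_stable_on ranked_upset_reaching_new_old base_ok recE).
Qed.

Lemma complete_expandE X : complete F X <-> complete F' X.
Proof.
split=> compX; first exact/(complete_expand (complete_old_defeats_new compX)).
exact/(complete_expand (complete_defeats_new compX)).
Qed.

Lemma admissible_core : admissible F (C0 :&: reaching_new).
Proof.
apply: admissibleI_upset (proj1 (proj2 (complete_expandE C0) compC0)).
by move=> x y Ux /attacks_expand; apply: reaching_new_attacker.
Qed.

Lemma core_sub_complete E : complete F E -> C0 :&: reaching_new \subset E.
Proof.
move=> compE; apply/subsetP => x /setIP[C0x Ux].
have UFx : x \in reaching_new :&: args F by rewrite in_setI Ux (subsetP sC0F).
have upUF := ranked_upset_reaching_new_old.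
by rewrite -(stable_on_uniq upUF stable_on_C0 (complete_stable_on upUF compE) UFx).
Qed.

Lemma defeats_new_core E : E \subset args F -> C0 :&: reaching_new \subset E -> defeats_new E.
Proof.
move=> sEF sCE; split=> // b new_b.
have [c C0c cb] := proj2 (complete_defeats_new compC0) b new_b.
have Uc := reaching_new_attacker (new_reaching_new new_b) cb.
by exists c; rewrite // (subsetP sCE) // in_setI C0c.
Qed.

Lemma preferred_expandE P : preferred F P <-> preferred F' P.
Proof.
split=> [prefP|[admP maxP]].
  have [admP maxP] := prefP; have /complete_expandE[admP' _] := preferred_complete prefP.
  split=> // S admS sPS; have [P' prefP' sSP'] := exists_preferred_above admS.
  have /complete_expandE[admP'F _] := preferred_complete prefP'.
  have eqP' : P' = P by apply: maxP; rewrite // (subset_trans sPS sSP').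
  by apply/eqP; rewrite eqEsubset sPS -eqP' sSP'.
have compP : complete F' P by apply: preferred_complete.
have defP := complete_defeats_new compP.
split=> [|S admS sPS]; first by case: (proj2 (complete_expandE P) compP).
have defS : defeats_new S by apply: defeats_newS defP sPS _; case: admS => [[]].
by apply: maxP sPS; apply/(admissible_expand defS).
Qed.

Lemma semi_stable_expandE P : semi_stable F P <-> semi_stable F' P.
Proof.
have def X : complete F X \/ complete F' X -> defeats_new X.
  by case=> [/complete_old_defeats_new|/complete_defeats_new].
split=> [[compP maxP]|[compP maxP]].
  have defP := def P (or_introl compP).
  split=> [|S compS]; first exact/complete_expandE.
  have compSF := proj2 (complete_expandE S) compS; have defS := def S (or_intror compS).
  rewrite range_expand_subE // => /(maxP S compSF)/eqP.
  by rewrite -range_expand_eqE // => /eqP.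
have defP := def P (or_intror compP).
split=> [|S compS]; first exact/complete_expandE.
have compSF' := proj1 (complete_expandE S) compS; have defS := def S (or_introl compS).
rewrite -range_expand_subE // => /(maxP S compSF')/eqP.
by rewrite range_expand_eqE // => /eqP.
Qed.

Lemma grounded_expand E : grounded F E -> grounded F' E.
Proof.
case=> compE minE; split=> [|S compS sSE]; first exact/complete_expandE.
exact/minE/sSE/complete_expandE.
Qed.

Lemma ideal_wrt_expand (Q Q' : {set T} -> Prop) E :
  (forall P, Q P <-> Q' P) -> (exists P, Q P) -> (forall P, Q P -> complete F P) ->
  ideal_wrt F Q E -> ideal_wrt F' Q' E.
Proof.
move=> eqQ [P0 QP0] compQ idealE; have [admE belowE maxE] := idealE.
have [[sEF _] _] := admE.
have core_sub : C0 :&: reaching_new \subset E.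
  apply: sub_ideal_wrt idealE; [by exists P0|by move=> P /compQ[]|exact: admissible_core|].
  by move=> P /compQ; apply: core_sub_complete.
have defE := defeats_new_core sEF core_sub.
split=> [|P /eqQ/belowE //|S admS belowS sES]; first exact/(admissible_expand defE).
have sSF : S \subset args F.
  by apply: subset_trans (belowS _ (proj1 (eqQ P0) QP0)) _; case: (compQ P0 QP0) => [[[]]].
have defS := defeats_newS defE sES sSF.
by apply: maxE => // [|P /eqQ/belowS]; first exact/(admissible_expand defS).
Qed.

Lemma sigma_expand_old (x : semantics) E : x <> Stage -> sigma x F E -> sigma x F' E.
Proof.
case: x => /= xNS sigmaE.
- exact/complete_expandE.
- exact/preferred_expandE.
- exact/semi_stable_expandE.
- by case: xNS.
- exact: scc_rec_expand (scc_rec_defeats_new (@stage_scc_base_ok T) sigmaE) sigmaE.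
- exact: scc_rec_expand (scc_rec_defeats_new (@naive_scc_base_ok T) sigmaE) sigmaE.
- exact: grounded_expand.
- apply: (@ideal_wrt_expand (preferred F)) sigmaE => [P||]; first exact: preferred_expandE.
    exact: exists_preferred.
  exact: preferred_complete.
- apply: (@ideal_wrt_expand (semi_stable F)) sigmaE => [P||]; first exact: semi_stable_expandE.
    exact: exists_semi_stable.
  by move=> P [].
Qed.

End NoNewAccepted.

Section NewAccepted.
Variables (C0 : {set T}) (b : T).
Hypotheses (compC0 : complete F' C0) (C0b : b \in C0) (new_b : b \in new_args).

Lemma complete_mem_new X : complete F' X -> b \in X.
Proof. by move=> compX; rewrite -(complete_agree compC0 compX (new_reaching_new new_b)). Qed.

Lemma scc_rec_mem_new base n X : scc_base_ok base -> scc_rec base n F' X -> b \in X.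
Proof.
move=> base_ok recX; have upU := ranked_upset_reaching_new.
have stX := scc_rec_stable_on upU base_ok recX.
by rewrite (stable_on_uniq upU stX (complete_stable_on upU compC0) (new_reaching_new new_b)).
Qed.

Lemma ideal_wrt_mem_new Q I : (exists P, Q P) -> (forall P, Q P -> complete F' P) ->
  ideal_wrt F' Q I -> b \in I.
Proof.
move=> existsQ compQ idealI.
have core_adm : admissible F' (C0 :&: reaching_new).
  exact: admissibleI_upset reaching_new_attacker (proj1 compC0).
have /subsetP -> // : C0 :&: reaching_new \subset I.
  apply: sub_ideal_wrt existsQ _ core_adm _ idealI => [P /compQ[]//|P /compQ compP].
  by apply/subsetP => z /setIP[C0z Uz]; rewrite -(complete_agree compC0 compP Uz).
by rewrite in_setI C0b new_reaching_new.
Qed.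

Lemma sigma_expand_new (x : semantics) : x <> Stage -> exists E', sigma x F' E' /\ b \in E'.
Proof.
case: x => /= xNS.
- by exists C0.
- have [P prefP] := exists_preferred F'.
  by exists P; split=> //; apply/complete_mem_new/preferred_complete.
- have [P ssP] := exists_semi_stable F'.
  by exists P; split=> //; apply/complete_mem_new/(proj1 ssP).
- by case: xNS.
- have [X recX] := exists_scc_rec (@stage_scc_base_ok T) F'.
  by exists X; split=> //; apply: scc_rec_mem_new (@stage_scc_base_ok T) recX.
- have [X recX] := exists_scc_rec (@naive_scc_base_ok T) F'.
  by exists X; split=> //; apply: scc_rec_mem_new (@naive_scc_base_ok T) recX.
- have [P groundedP _] := exists_grounded_sub compC0.
  by exists P; split=> //; apply/complete_mem_new/(proj1 groundedP).
- have [I idealI] := exists_ideal_wrt F' (preferred F').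
  exists I; split=> //; apply: ideal_wrt_mem_new idealI; first exact: exists_preferred.
  exact: preferred_complete.
- have [I eagerI] := exists_ideal_wrt F' (semi_stable F').
  exists I; split=> //; apply: ideal_wrt_mem_new eagerI; first exact: exists_semi_stable.
  by move=> P [].
Qed.

End NewAccepted.

End RationalExpansion.

Theorem proposition44 (T : finType) (x : semantics) (F F' : AF T) :
  wf_AF F -> wf_AF F' -> rm_exp F F' ->
  forall E : {set T}, sigma x F E ->
    exists E' : {set T}, sigma x F' E' /\ (~~ (E' \subset args F) \/ E' = E).
Proof.
move=> wfF wfF' rmFF' E sigmaE.
have [xS|xNS] := classic (x = Stage).
  by rewrite xS /= in sigmaE *; exact: (stage_expand wfF wfF' rmFF' sigmaE).
have [C0 compC0] := exists_complete F'.
have [sC0F|/subsetPn[b C0b notFb]] := boolP (C0 \subset args F).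
  by exists E; split; [exact: (sigma_expand_old wfF wfF' rmFF' compC0 sC0F xNS sigmaE)|right].
have new_b : b \in new_args F F'.
  by rewrite in_setD notFb; case: compC0 => [[[/subsetP->]]].
have [E' [sigmaE' E'b]] := sigma_expand_new wfF' rmFF' compC0 C0b new_b xNS.
by exists E'; split=> //; left; apply/subsetPn; exists b.
Qed.
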